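(* Let $3 \leq m < n$ be integers, let $p_k$ denote the $k$-th prime (with $p_1=2$), and let $O_k = \frac{p_k^2-1}{6}$. Then \[ O_n \not\equiv O_m \pmod{5 \cdot 7 \cdot 11 \cdots p_m}, \] where the modulus $5 \cdot 7 \cdots p_m = \prod_{i=3}^{m} p_i$ is the product of all primes from $5$ up to $p_m$. *)

From mathcomp Require Import all_boot.
Set Implicit Arguments. Unset Strict Implicit. Unset Printing Implicit Defensive.

Lemma next_prime_ex (m : nat) : exists p, (m < p) && prime p.
Proof. case: (prime_above m) => p Hmp Hp; exists p; by rewrite Hmp Hp. Qed.

Definition next_prime (m : nat) : nat := ex_minn (next_prime_ex m).

(* nth_prime k = p_k, the k-th prime, 1-indexed: p_1 = 2, p_2 = 3, p_3 = 5, ...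
   (nth_prime 0 is a junk value equal to 2 as well). *)
Fixpoint nth_prime (k : nat) : nat :=
  match k with
  | 0 | 1 => 2
  | k'.+1 => next_prime (nth_prime k')
  end.

(* O_k = (p_k^2 - 1)/6 (exact division for k >= 3). *)
Definition O (k : nat) : nat := ((nth_prime k) ^ 2 - 1) %/ 6.

Definition primorial_from5 (m : nat) : nat := \prod_(3 <= i < m.+1) nth_prime i.

From mathcomp Require Import all_boot.
From mathcomp Require Import zify.

(** [p_m] divides the modulus, and [6 O_k + 1 = p_k ^ 2] for
   [k >= 3], so a congruence [O_n = O_m] modulo [p_m] would give
   [p_n ^ 2 = p_m ^ 2 = 0] modulo [p_m]; hence the prime [p_m] divides the
   larger prime [p_n], which is absurd. *)

Lemma next_primeP m : m < next_prime m /\ prime (next_prime m).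
Proof. by rewrite /next_prime; case: ex_minnP => p /andP[]. Qed.

Lemma nth_prime_prime k : prime (nth_prime k).
Proof. by case: k => [|[|k]] //; case: (next_primeP (nth_prime k.+1)). Qed.

Lemma nth_prime_ltS k : nth_prime k.+1 < nth_prime k.+2.
Proof. by case: (next_primeP (nth_prime k.+1)). Qed.

Lemma nth_prime_lt m n : 0 < m -> m < n -> nth_prime m < nth_prime n.
Proof.
case: m => // m _; case: n => // n; rewrite ltnS.
exact: (homo_ltn ltn_trans (f := fun i => nth_prime i.+1) nth_prime_ltS).
Qed.

Lemma nth_prime_ge5 k : 3 <= k -> 5 <= nth_prime k.
Proof.
move=> k_ge3.
have : nth_prime 2 < nth_prime k by apply: nth_prime_lt.
have : nth_prime k != 4 by apply: contraTneq (nth_prime_prime k) => ->.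
have : 2 < nth_prime 2 := nth_prime_ltS 0.
lia.
Qed.

Lemma prime_coprime6 p : prime p -> 5 <= p -> coprime p 6.
Proof.
move=> p_pr p_ge5.
rewrite -[6]/(2 * 3) coprimeMr !(coprime_sym p) !prime_coprime //.
by rewrite !dvdn_prime2 //; lia.
Qed.

Lemma sqr_mod6 p : coprime p 6 -> p ^ 2 = 1 %[mod 6].
Proof.
rewrite -modnXm -coprime_modl.
by case: (p %% 6) (ltn_pmod p (isT : 0 < 6)) => [|[|[|[|[|[|r]]]]]].
Qed.

Lemma nth_prime_sqr k : 3 <= k -> nth_prime k ^ 2 = O k * 6 + 1.
Proof.
move=> k_ge3; have p_pr := nth_prime_prime k.
have sqr_gt0 : 0 < nth_prime k ^ 2 by rewrite expn_gt0 prime_gt0.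
have : 6 %| nth_prime k ^ 2 - 1.
  by rewrite -eqn_mod_dvd // eq_sym sqr_mod6 // prime_coprime6 ?nth_prime_ge5.
by rewrite /O => /divnK ->; rewrite subnK.
Qed.

Lemma nth_prime_dvd_primorial_from5 m : 3 <= m -> nth_prime m %| primorial_from5 m.
Proof. by move=> m_ge3; rewrite /primorial_from5 big_nat_recr //= dvdn_mull. Qed.

Theorem theorem4 (m n : nat) (H3m : 3 <= m) (Hmn : m < n) :
  O n != O m %[mod primorial_from5 m].
Proof.
apply/negP => /eqP eqO.
have lt_pm_pn : nth_prime m < nth_prime n.
  by apply: nth_prime_lt Hmn; apply: leq_trans H3m.
have eqOp : O n = O m %[mod nth_prime m].
  have dvd_pm := nth_prime_dvd_primorial_from5 m H3m.
  by rewrite -(modn_dvdm _ dvd_pm) eqO modn_dvdm.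
have eq_sqr : nth_prime n ^ 2 = nth_prime m ^ 2 %[mod nth_prime m].
  rewrite !nth_prime_sqr //; last exact: leq_trans H3m (ltnW Hmn).
  by rewrite -modnDml -modnMml eqOp modnMml modnDml.
have : nth_prime m %| nth_prime n ^ 2.
  by rewrite /dvdn eq_sqr -/(dvdn _ _) dvdn_exp.
rewrite Euclid_dvdX ?nth_prime_prime // andbT dvdn_prime2 ?nth_prime_prime //.
by rewrite ltn_eqF.
Qed.
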